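(* Let $\langle Q,A,\delta,\{q_0\},F\rangle$ be a transitive group automaton with $F\neq\emptyset$, let $k\in\mathbb{N}$, and let $\langle Q_k,A,\delta_k,I_k,F_k\rangle$ be the $k$-digit buffer over it. Let $x\in A^{\mathbb{N}}$ be normal and $s\in Q_k$. Then there is a subset $Q'\subseteq Q_k$ such that: $Q'$ is closed under $\delta_k$ and for all $s_1,s_2\in Q'$ there is a word $u\in A^*$ with $s_1\xrightarrow{u}s_2$ (i.e. the restricted automaton on $Q'$ is transitive); $F_k\cap Q'\neq\emptyset$; the second coordinate of $\widetilde{T}^i(x,s)$ lies in $Q'$ for all sufficiently large $i$; and every word in $A^k$ appears as the second coordinate of some element of $Q'$ (i.e. for each $v\in A^k$ there is $(q,v)\in Q'$).
   Context: An automaton is transitive if for all states $q_1,q_2$ there is a word $w$ with $q_1\xrightarrow{w}q_2$. A group automaton is a deterministic automaton in which, for each symbol $a$, the map $p\mapsto\delta(p,a)$ is a permutation of the states. The $k$-digit buffer over $\langle Q,A,\delta,\{q_0\},F\rangle$ is the automaton with state set $Q_k=Q\times A^k$, final states $F_k=F\times A^k$, initial state set $I_k=\{(q_0,w_0)\}$ for some fixed $w_0\in A^k$, and transition function $\delta_k((q,w),a)=(\delta(q,a),w)$ if $\delta(q,a)\notin F$, and $\delta_k((q,w),a)=(\delta(q,a),w[2..k]a)$ if $\delta(q,a)\in F$. For $X=A^{\mathbb{N}}$ with shift $T$ ($(Tx)_i=x_{i+1}$), the augmented map on $X\times Q_k$ is $\widetilde{T}(x,s)=(Tx,\delta_k(s,x_1))$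 where $x=x_1x_2\cdots$. A sequence $x$ is normal if every word $w\in A^*$ occurs in $x$ with limiting frequency $(\#A)^{-|w|}$. *)

From HB Require Import structures.
From mathcomp Require Import all_boot all_order all_algebra.
Set Implicit Arguments. Unset Strict Implicit. Unset Printing Implicit Defensive.
Import Order.TTheory GRing.Theory Num.Theory.

Definition run (S A : Type) (d : S -> A -> S) (s : S) (w : seq A) : S := foldl d s w.

Definition transitive_aut (S A : Type) (d : S -> A -> S) : Prop :=
  forall s1 s2 : S, exists w : seq A, run d s1 w = s2.

Definition group_aut (S A : finType) (d : S -> A -> S) : Prop :=
  forall a : A, bijective (fun p => d p a).

Definition buf_shift (A : Type) (k : nat) (w : k.-tuple A) (a : A) : k.-tuple A :=
  [tuple of behead (rcons w a)].

Definition buffer_delta (Q A : finType) (delta : Q -> A -> Q) (F : {set Q})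
    (k : nat) (s : Q * k.-tuple A) (a : A) : Q * k.-tuple A :=
  let q' := delta s.1 a in
  if q' \in F then (q', buf_shift s.2 a) else (q', s.2).

Definition buffer_final (Q A : finType) (F : {set Q}) (k : nat) : {set Q * k.-tuple A} :=
  [set s | s.1 \in F].

(* prefix x_1 ... x_n of a sequence x : nat -> A (x_1 is x 0) *)
Definition prefix (A : Type) (x : nat -> A) (n : nat) : seq A := mkseq x n.

(* number of occurrences of w starting at positions 1..n of x *)
Definition occ (A : eqType) (x : nat -> A) (w : seq A) (n : nat) : nat :=
  count (fun i => mkseq (fun j => x (i + j)%N) (size w) == w) (iota 0 n).

Definition normal (A : finType) (x : nat -> A) : Prop :=
  forall (w : seq A) (eps : rat), (0 < eps)%R ->
    exists N : nat, forall n : nat, (N <= n)%N ->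
      (`| (occ x w n)%:R / n%:R - ((#|A|%:R) ^+ (size w))^-1 | < eps)%R.

(* second coordinate of T~^i (x, s) *)
Definition aug_state (Q A : finType) (delta : Q -> A -> Q) (F : {set Q}) (k : nat)
    (x : nat -> A) (s : Q * k.-tuple A) (i : nat) : Q * k.-tuple A :=
  run (buffer_delta delta F (k:=k)) s (prefix x i).

From Pilot Require Import Defs.
From HB Require Import structures.
From mathcomp Require Import all_boot all_order all_algebra.
Set Implicit Arguments. Unset Strict Implicit. Unset Printing Implicit Defensive.
Import Order.TTheory GRing.Theory Num.Theory.

(* 1. Reachability in an arbitrary finite deterministic automaton: a state is
      a bottom state when every state reachable from it reaches it back; the
      states reachable from a bottom state form a closed, strongly connected
      set.  Every state reaches a bottom state, and iterating this over the
      finitely many states yields one word W sending EVERY state to a bottom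
      state.
   2. The buffer over a transitive group automaton: its first coordinate runs
      the underlying automaton, so F_k is reachable from everywhere; and from
      a final state, since each letter a permutes Q, reading a's until F is
      hit again shifts exactly the letter a into the buffer.  Hence from a
      final state every buffer content v in A^k is reachable.
   3. A normal sequence contains every word, in particular W.  After the
      augmented run has read an occurrence of W it sits in a bottom state t,
      and Q' := the states reachable from t has all the required properties. *)

Section Reachability.

Variables (S A : finType) (d : S -> A -> S).

Definition step : rel S := fun p q => [exists a, d p a == q].

Lemma run_cat p u v : run d p (u ++ v) = run d (run d p u) v.
Proof. exact: foldl_cat. Qed.

Lemma connect_run p u : connect step p (run d p u).
Proof.
elim: u p => [|a u IH] p /=; first exact: connect0.
apply: connect_trans (IH (d p a)); apply: connect1; apply/existsP; by exists a.
Qed.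

Lemma connect_runP p q : connect step p q -> exists u, run d p u = q.
Proof.
case/connectP=> ps; elim: ps p => [|c ps IH] p /=; first by move=> _ ->; exists [::].
case/andP=> /existsP [a /eqP dpa] path_c last_q.
have [u run_u] := IH c path_c last_q; exists (a :: u); by rewrite /= dpa.
Qed.

Definition reach_set (t : S) : {set S} := [set r | connect step t r].

Definition bottom (q : S) : Prop := forall r, connect step q r -> connect step r q.

(* A state minimising the number of reachable states is bottom. *)
Lemma exists_bottom p : exists2 q, connect step p q & bottom q.
Proof.
case: (arg_minnP (fun q => #|reach_set q|) (connect0 step p)) => q pq q_min.
exists q => // r qr.
have sub_rq : reach_set r \subset reach_set q.
  by apply/subsetP => t; rewrite !inE; apply: connect_trans.
have /eqP/setP/(_ q) : reach_set r == reach_set q.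
  by rewrite eqEcard sub_rq q_min // (connect_trans pq qr).
by rewrite !inE connect0.
Qed.

Lemma bottom_connect q r : bottom q -> connect step q r -> bottom r.
Proof. by move=> bq qr t rt; exact: connect_trans (bq t (connect_trans qr rt)) qr. Qed.

Lemma exists_bottom_word : exists W, forall p, bottom (run d p W).
Proof.
suff [W HW] : exists W, forall p, p \in enum S -> bottom (run d p W).
  by exists W => p; apply: HW; rewrite mem_enum.
elim: (enum S) => [|p ps [W HW]]; first by exists [::].
have [q pWq bq] := exists_bottom (run d p W).
have [u run_u] := connect_runP pWq.
exists (W ++ u) => p'; rewrite inE run_cat => /orP [/eqP -> | p'_ps].
  by rewrite run_u.
exact: bottom_connect (HW _ p'_ps) (connect_run _ _).
Qed.

Lemma reach_set_closed t p a : p \in reach_set t -> d p a \in reach_set t.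
Proof.
rewrite !inE => tp; apply: connect_trans tp (connect1 _).
by apply/existsP; exists a.
Qed.

Lemma reach_set_run t u : run d t u \in reach_set t.
Proof. by rewrite inE connect_run. Qed.

Lemma bottom_reach_set_connected t p q :
  bottom t -> p \in reach_set t -> q \in reach_set t -> exists u, run d p u = q.
Proof.
rewrite !inE => bt tp tq; apply: connect_runP.
exact: connect_trans (bt _ tp) tq.
Qed.

End Reachability.

Section Buffer.

Variables (Q A : finType) (delta : Q -> A -> Q) (F : {set Q}) (k : nat).

Local Notation bd := (buffer_delta delta F (k:=k)).

Lemma run_buffer_fst p u : (run bd p u).1 = run delta p.1 u.
Proof.
elim: u p => [|a u IH] p //=; rewrite IH; congr run.
by rewrite /buffer_delta; case: ifP.
Qed.

Lemma reach_final (f : Q) (p : Q * k.-tuple A) :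
  transitive_aut delta -> f \in F -> exists u, (run bd p u).1 \in F.
Proof.
move=> trans Ff; have [u run_u] := trans p.1 f.
by exists u; rewrite run_buffer_fst run_u.
Qed.

Lemma shift_letter_iter a n (p : Q * k.-tuple A) :
  iter n.+1 (delta^~ a) p.1 \in F ->
  exists u, (run bd p u).1 \in F /\ (run bd p u).2 = buf_shift p.2 a.
Proof.
elim: n p => [|n IH] p orbit_F; case dpF: (delta p.1 a \in F);
  try by exists [:: a]; rewrite /= /buffer_delta dpF.
  by rewrite /= dpF in orbit_F.
have [|u [u_F u_buf]] := IH (delta p.1 a, p.2); first by rewrite -iterSr.
have bd_pa : bd p a = (delta p.1 a, p.2) by rewrite /buffer_delta dpF.
by exists (a :: u); rewrite /= bd_pa.
Qed.

(* In a group automaton every a-orbit is a cycle, so from a final state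
   any letter can be pushed into the buffer. *)
Lemma shift_letter (p : Q * k.-tuple A) a :
  group_aut delta -> p.1 \in F ->
  exists u, (run bd p u).1 \in F /\ (run bd p u).2 = buf_shift p.2 a.
Proof.
move=> group pF; have [g dK _] := group a.
have /(_ p.1) := iter_order (can_inj dK).
rewrite -orderSpred => orbit_p.
by apply: (@shift_letter_iter a (order (delta^~ a) p.1).-1); rewrite orbit_p.
Qed.

Lemma drop_behead_rcons (b l : seq A) a :
  drop (size l) (behead (rcons b a) ++ l) = drop (size l).+1 (b ++ a :: l).
Proof. by case: b => [|c b] /=; [rewrite drop_size | rewrite -cats1 -catA]. Qed.

Lemma push_word (l : seq A) (p : Q * k.-tuple A) :
  group_aut delta -> p.1 \in F ->
  exists u, (run bd p u).1 \in F /\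
            val (run bd p u).2 = drop (size l) (val p.2 ++ l).
Proof.
move=> group; elim: l p => [|a l IH] p pF; first by exists [::]; rewrite cats0 drop0.
have [u [u_F u_buf]] := shift_letter a group pF.
have [u' [u'_F u'_buf]] := IH _ u_F.
by exists (u ++ u'); rewrite run_cat u'_buf u_buf /= drop_behead_rcons.
Qed.

Lemma load_buffer (p : Q * k.-tuple A) (v : k.-tuple A) :
  group_aut delta -> p.1 \in F -> exists u, (run bd p u).2 = v.
Proof.
move=> group pF; have [u [_ u_buf]] := push_word (val v) group pF.
by exists u; apply: val_inj; rewrite u_buf drop_size_cat // !size_tuple.
Qed.

End Buffer.

Lemma prefixD (A : Type) (x : nat -> A) i n :
  Defs.prefix x (i + n) = Defs.prefix x i ++ mkseq (fun j => x (i + j)) n.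
Proof.
rewrite /Defs.prefix /mkseq iotaD map_cat add0n; congr (_ ++ _).
by rewrite -{1}(addn0 i) iotaDl -map_comp.
Qed.

(* Every word occurs in a normal sequence: its frequency tends to a positive
   limit, so its number of occurrences cannot stay 0. *)
Lemma normal_occurs (A : finType) (x : nat -> A) (W : seq A) :
  normal x -> exists i, mkseq (fun j => x (i + j)) (size W) = W.
Proof.
move=> x_normal.
have A_gt0 : (0 < #|A|)%N by apply/card_gt0P; exists (x 0).
pose c : rat := ((#|A|%:R) ^+ size W)^-1.
have c_gt0 : (0 < c)%R by rewrite invr_gt0 exprn_gt0 // ltr0n.
have [N HN] := x_normal W c c_gt0.
have : (0 < occ x W N)%N.
  move: (HN N (leqnn N)); case: (occ x W N) => [|m] //.
  by rewrite mul0r add0r normrN gtr0_norm // ltxx.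
by rewrite /occ -has_count => /hasP [i _ /eqP]; exists i.
Qed.

Theorem lemma4p2 (Q A : finType) (delta : Q -> A -> Q) (q0 : Q) (F : {set Q})
  (k : nat) (w0 : k.-tuple A)
  (Htrans : transitive_aut delta) (Hgroup : group_aut delta)
  (HF : F != set0)
  (x : nat -> A) (Hx : normal x) (s : Q * k.-tuple A) :
  exists Q' : {set Q * k.-tuple A},
    [/\ (forall s1, s1 \in Q' -> forall a : A, buffer_delta delta F s1 a \in Q'),
        (forall s1 s2, s1 \in Q' -> s2 \in Q' ->
           exists u : seq A, run (buffer_delta delta F (k:=k)) s1 u = s2),
        @buffer_final Q A F k :&: Q' != set0,
        (exists N : nat, forall i : nat, (N <= i)%N -> aug_state delta F x s i \in Q') &
        (forall v : k.-tuple A, exists q : Q, (q, v) \in Q')].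
Proof.
set bd := buffer_delta delta F (k:=k).
have [f Ff] := set0Pn _ HF.
have [W W_bottom] := exists_bottom_word bd.
have [i W_at_i] := normal_occurs W Hx.
pose t := aug_state delta F x s (i + size W).
have t_bottom : bottom bd t by rewrite /t /aug_state prefixD W_at_i run_cat.
have [u u_F] := reach_final t Htrans Ff.
exists (reach_set bd t); split.
- by move=> s1 s1_Q' a; apply: reach_set_closed.
- by move=> s1 s2; apply: bottom_reach_set_connected.
- by apply/set0Pn; exists (run bd t u); rewrite in_setI reach_set_run inE u_F.
- exists (i + size W) => j /subnKC <-.
  by rewrite /aug_state prefixD run_cat reach_set_run.
- move=> v; have [u' u'_buf] := load_buffer v Hgroup u_F.
  exists (run bd (run bd t u) u').1.
  by rewrite -u'_buf -surjective_pairing -run_cat reach_set_run.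
Qed.
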